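(* Let $G\le \mathrm{Aut}(X^* )$ be a closed self-similar subgroup with Haar probability measure $\mu$. Then for every $n,m\ge 1$, every $a\in\pi_n(G)$, every $b\in\pi_m(G)$ and every $v\in\mathcal{L}_n$ such that $C_a\cap\mathcal{T}_v^{-1}(C_b)\neq\emptyset$, we have $$\mu\big(C_a\cap\mathcal{T}_v^{-1}(C_b)\big)\ \ge\ \mu(C_a)\cdot\mu(C_b).$$
   Context: $X$ is a finite alphabet and $X^*$ the rooted regular tree of finite words over $X$; $\mathrm{Aut}(X^* )$ is its automorphism group with the profinite topology. For $g\in\mathrm{Aut}(X^* )$ and $v\in X^*$, the section $g|_v\in\mathrm{Aut}(X^* )$ is defined by $g(vw)=g(v)\,g|_v(w)$ for all $w\in X^*$. $G$ is self-similar if $g|_v\in G$ for all $g\in G$, $v\in X^*$. $X^n$ is the truncated tree of height $n$, $\mathcal{L}_n\subset X^*$ the set of vertices at distance $n$ from the root, and $\pi_n:G\to\mathrm{Aut}(X^n)$ the restriction map; $\mathrm{St}_G(n)=\ker\pi_n$. For $a\in\pi_n(G)$, the cone set is $C_a=\pi_n^{-1}(a)\subseteq G$. For $v\in X^*$, $\mathcal{T}_v:G\to G$ is the map $\mathcal{T}_v(g)=g|_v$. *)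

From HB Require Import structures.
From mathcomp Require Import all_boot all_order all_algebra.
From mathcomp Require Import all_classical all_reals.
From mathcomp Require Import all_analysis.
Set Implicit Arguments. Unset Strict Implicit. Unset Printing Implicit Defensive.
Import Order.TTheory GRing.Theory Num.Theory.
Local Open Scope ring_scope.
Local Open Scope classical_set_scope.

Definition treemap (X : finType) := seq X -> seq X.
HB.instance Definition _ (X : finType) := gen_eqMixin (treemap X).
HB.instance Definition _ (X : finType) := gen_choiceMixin (treemap X).
HB.instance Definition _ (X : finType) :=
  isPointed.Build (treemap X) (fun w => w).

Section TreeAut.
Variable X : finType.
Local Notation treemap := (treemap X).


Definition is_tree_aut (g : treemap) : Prop :=
  bijective g /\ (forall w, size (g w) = size w) /\
  (forall v w, exists u, g (v ++ w) = g v ++ u).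

(* the section g|_v, defined by g(vw) = g(v) g|_v(w) *)
Definition section (g : treemap) (v : seq X) : treemap :=
  fun w => drop (size v) (g (v ++ w)).

(* g and h have the same image under pi_n (restriction to the truncated
   tree X^n of words of length <= n) *)
Definition agree (n : nat) (g h : treemap) : Prop :=
  forall w, (size w <= n)%N -> g w = h w.

Definition closed_subgroup (G : set treemap) : Prop :=
  [/\ (forall g, G g -> is_tree_aut g),
      G (fun w => w),
      (forall g h, G g -> G h -> G (g \o h)),
      (forall g, G g -> exists g', [/\ G g', g \o g' = (fun w => w)
                                           & g' \o g = (fun w => w)])
    & (* closed in the profinite topology of Aut(X^* ) *)
      (forall g, is_tree_aut g ->
         (forall n, exists h, G h /\ agree n g h) -> G g)].

Definition self_similar (G : set treemap) : Prop :=
  forall g v, G g -> G (section g v).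

(* the cone set C_a, for a = pi_n(h) in pi_n(G) (h in G) *)
Definition cone (G : set treemap) (n : nat) (h : treemap) : set treemap :=
  [set g | G g /\ agree n g h].

(* the family of all cone sets of G, generating the Borel sigma-algebra of G *)
Definition cones (G : set treemap) : set (set treemap) :=
  [set A | exists n h, G h /\ A = cone G n h].

Local Notation Gspace G := (g_sigma_algebraType (cones G)).

Definition Tv_preimage (G : set treemap) (v : seq X) (B : set treemap)
  : set treemap := [set g | G g /\ B (section g v)].

Definition is_haar_prob (R : realType) (G : set treemap)
  (mu : {measure set (Gspace G) -> \bar R}) : Prop :=
  [/\ mu [set: Gspace G] = 1%E, mu (G : set (Gspace G)) = 1%E
    & forall h, G h -> forall A : set (Gspace G), measurable A ->
        mu [set g : Gspace G | G g /\ A (h \o g)] = mu (A `&` G)].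

End TreeAut.
Notation Gspace G := (g_sigma_algebraType (cones G)).

From HB Require Import structures.
From mathcomp Require Import all_boot all_order all_algebra.
From mathcomp Require Import all_classical all_reals.
From mathcomp Require Import all_analysis.
Import Order.TTheory GRing.Theory Num.Theory.
Local Open Scope ring_scope.
Local Open Scope classical_set_scope.
Local Open Scope ereal_scope.
Set Implicit Arguments. Unset Strict Implicit.

(* Translating by an element g0 of C_a ∩ T_v^-1(C_b) and using left invariance
   of mu reduces the claim to a = b = 1, i.e. to
   mu(St(n)) mu(St(m)) <= mu(K) for the subgroup K = St(n) ∩ T_v^-1(St(m)).
   Take a maximal family of r pairwise disjoint K-cosets inside St(n): by
   maximality they cover St(n), so mu(St(n)) <= r mu(K).  Elements of St(n) fix
   v, so h |-> h|_v is multiplicative on St(n) and disjoint K-cosets h_i K give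
   disjoint St(m)-cosets h_i|_v St(m); hence r mu(St(m)) <= 1.  Such a family
   exists because r <= 1 / mu(St(m)) bounds the size of every disjoint family. *)

Lemma mule_le_of_natmul (R : realDomainType) (t p q : \bar R) r :
  0 <= p -> 0 <= q -> t <= q *+ r -> p *+ r <= 1 -> t * p <= q.
Proof.
move=> p0 q0 tq pr; apply: le_trans (lee_wpmul2r p0 tq) _.
rewrite -mule_natr -muleA mule_natl -[leRHS]mule1.
exact: lee_wpmul2l.
Qed.

Lemma trivIset_ord_extend T (F : nat -> set T) (A : set T) r :
  trivIset `I_r F -> (forall j, (j < r)%N -> A `&` F j = set0) ->
  trivIset `I_r.+1 (fun i => if (i < r)%N then F i else A).
Proof.
move=> tF dA i j /= Ii Ij.
case: ltnP => ir; case: ltnP => jr.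
- exact: tF.
- by rewrite setIC dA // => /set0P; rewrite eqxx.
- by rewrite dA // => /set0P; rewrite eqxx.
- move: Ii Ij; rewrite !ltnS => Ii Ij _.
  by apply/eqP; rewrite eqn_leq (leq_trans Ii jr) (leq_trans Ij ir).
Qed.

Lemma exists_last_nat (P : nat -> Prop) B : P 0%N -> ~ P B ->
  exists r, P r /\ ~ P r.+1.
Proof.
move=> P0; elim: B => [//|B IH] NB.
by have [PB|/IH] := pselect (P B); [exists B | apply].
Qed.

Section TreeMaps.
Variable X : finType.
Implicit Types (g h k : treemap X) (v w : seq X).

Lemma comp_idK (f g : treemap X) : f \o g = (fun w => w) -> cancel g f.
Proof. by move=> E w; rewrite -[RHS]/((fun w => w) w) -E. Qed.

Lemma tree_aut_inj g : is_tree_aut g -> injective g.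
Proof. by case=> /bij_inj. Qed.

Lemma tree_aut_size g w : is_tree_aut g -> size (g w) = size w.
Proof. by case=> _ []. Qed.

Lemma tree_aut_cat g v w : is_tree_aut g -> g (v ++ w) = g v ++ section g v w.
Proof.
move=> Hg; have [_ [_ /(_ v w) [u E]]] := Hg.
by rewrite /section E drop_size_cat // tree_aut_size.
Qed.

Lemma size_section g v w : is_tree_aut g -> size (section g v w) = size w.
Proof.
move=> Hg; have := congr1 size (tree_aut_cat v w Hg).
by rewrite size_cat !(tree_aut_size _ Hg) size_cat => /addnI.
Qed.

Lemma section_inj g v : is_tree_aut g -> injective (section g v).
Proof.
move=> Hg w1 w2 E.
have /(tree_aut_inj Hg)/eqP : g (v ++ w1) = g (v ++ w2).
  by rewrite !tree_aut_cat // E.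
by rewrite eqseq_cat // => /andP[_ /eqP].
Qed.

Lemma section_comp g k v : is_tree_aut k -> k v = v ->
  section (g \o k) v = section g v \o section k v.
Proof.
move=> Hk Hv; apply: funext => w.
by rewrite /section /= tree_aut_cat // Hv drop_size_cat.
Qed.

Lemma section_id v : section (fun w => w) v = (fun w => w).
Proof. by apply: funext => w; rewrite /section drop_size_cat. Qed.

Lemma agree_sym n g k : agree n g k -> agree n k g.
Proof. by move=> H w /H. Qed.

Lemma agree_trans n g h k : agree n g h -> agree n h k -> agree n g k.
Proof. by move=> H1 H2 w Hw; rewrite H1 // H2. Qed.

Lemma agree_leq n N g k : (n <= N)%N -> agree N g k -> agree n g k.
Proof. by move=> Hn H w Hw; apply: H; apply: leq_trans Hn. Qed.

Lemma agree_compl n f g k : agree n g k -> agree n (f \o g) (f \o k).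
Proof. by move=> H w Hw /=; rewrite H. Qed.

Lemma agree_injl n f g k : injective f ->
  agree n (f \o g) (f \o k) -> agree n g k.
Proof. by move=> If H w /H /If. Qed.

Lemma agree_section n m v g k : size v = n -> agree (n + m) g k ->
  agree m (section g v) (section k v).
Proof. by move=> Hv H w Hw; rewrite /section H // size_cat Hv leq_add2l. Qed.

Lemma agree_id_comp n g k : agree n g (fun w => w) -> agree n k (fun w => w) ->
  agree n (g \o k) (fun w => w).
Proof. by move=> Hg Hk w Hw /=; rewrite Hk // Hg. Qed.

Lemma agree_id_rinv n g k : agree n g (fun w => w) ->
  (forall w, size (k w) = size w) -> g \o k = (fun w => w) ->
  agree n k (fun w => w).
Proof.
by move=> Hg Hk /comp_idK E w Hw; rewrite -[RHS]E Hg ?Hk.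
Qed.

Lemma agree_cancell n f g k : injective f -> agree n f k ->
  agree n (f \o g) k <-> agree n g (fun w => w).
Proof.
move=> If Hf; split=> H w Hw; last by rewrite /= H // Hf.
by have /= := H w Hw; rewrite -(Hf w Hw) => /If.
Qed.

End TreeMaps.

Section Subgroup.
Variables (X : finType) (G : set (treemap X)).
Hypotheses (HG : closed_subgroup G) (HS : self_similar G).
Implicit Types (g h k : treemap X) (v w : seq X).

Lemma mem_tree_aut g : G g -> is_tree_aut g.
Proof. by case: HG => H _ _ _ _ /H. Qed.

Lemma mem_id : G (fun w => w).
Proof. by case: HG. Qed.

Lemma mem_comp g h : G g -> G h -> G (g \o h).
Proof. by case: HG => _ _ H _ _; apply: H. Qed.

Lemma mem_inv g : G g ->
  exists g', [/\ G g', g \o g' = (fun w => w) & g' \o g = (fun w => w)].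
Proof. by case: HG => _ _ _ H _ /H. Qed.

Definition stab n := cone G n (fun w => w).

(* [lpre h A] is the translate h^-1 A, the form in which [is_haar_prob]
   states left invariance. *)
Definition lpre h (A : set (treemap X)) := [set g | G g /\ A (h \o g)].

Definition stab_sec n m v := stab n `&` Tv_preimage G v (stab m).

Lemma stab_inv n k j : stab n k -> G j -> k \o j = (fun w => w) -> stab n j.
Proof.
move=> [_ Ak] Gj E; split=> //.
by apply: agree_id_rinv Ak _ E => w; apply: tree_aut_size (mem_tree_aut Gj).
Qed.

Lemma stab_sec_id n m v : stab_sec n m v (fun w => w).
Proof.
have Gid := mem_id.
by split; split=> //; split; [exact: HS | rewrite section_id].
Qed.

Lemma stab_sec_comp n m v g k : size v = n ->
  stab_sec n m v g -> stab_sec n m v k -> stab_sec n m v (g \o k).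
Proof.
move=> Hv [[Gg Ag] [_ [_ Bg]]] [[Gk Ak] [_ [_ Bk]]].
have Ggk := mem_comp Gg Gk.
split; split=> //; first exact: agree_id_comp.
split; first exact: HS.
rewrite section_comp; [exact: agree_id_comp | exact: mem_tree_aut |].
by apply: Ak; rewrite Hv.
Qed.

Lemma stab_sec_rinv n m v k j : size v = n ->
  stab_sec n m v k -> G j -> k \o j = (fun w => w) -> stab_sec n m v j.
Proof.
move=> Hv [Sk [_ [_ Bk]]] Gj E.
have [Gj' Aj] := stab_inv Sk Gj E; have Tj := mem_tree_aut Gj.
split=> //; split=> //; split; first exact: HS.
apply: agree_id_rinv Bk (fun w => size_section v w Tj) _.
by rewrite -section_comp ?E ?section_id //; apply: Aj; rewrite Hv.
Qed.

Lemma lpre_cone n h g0 : cone G n h g0 -> lpre g0 (cone G n h) = stab n.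
Proof.
move=> [G0 A0]; have I0 := tree_aut_inj (mem_tree_aut G0).
apply/seteqP; split=> g [Gg Ag]; split=> //.
  by apply/(agree_cancell g I0 A0); case: Ag.
by split; [exact: mem_comp | apply/(agree_cancell g I0 A0)].
Qed.

Lemma lpre_cylinder n m v ha hb g0 : size v = n ->
  (cone G n ha `&` Tv_preimage G v (cone G m hb)) g0 ->
  lpre g0 (cone G n ha `&` Tv_preimage G v (cone G m hb)) = stab_sec n m v.
Proof.
move=> Hv [C0 [_ [_ B0]]].
have Is0 := section_inj (v := v) (mem_tree_aut (proj1 C0)).
have sec_comp g : stab n g -> section (g0 \o g) v = section g0 v \o section g v.
  move=> [Gg Ag]; apply: section_comp (mem_tree_aut Gg) _.
  by apply: Ag; rewrite Hv.
apply/seteqP; split=> g.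
  move=> [Gg [Cg [_ [_ Bg]]]]; have Sg : stab n g by rewrite -(lpre_cone C0).
  split=> //; split=> //; split; first exact: HS.
  by apply/(agree_cancell _ Is0 B0); rewrite -sec_comp.
move=> [Sg [_ [_ Bg]]].
have [Gg [G0g Ag]] : lpre g0 (cone G n ha) g by rewrite lpre_cone.
split=> //; split; first by split.
split=> //; split; first exact: HS.
by rewrite sec_comp //; apply/(agree_cancell _ Is0 B0).
Qed.

Lemma lpre_stab_sec_meet n m v a b x y : size v = n -> G a ->
  lpre a (stab_sec n m v) x -> lpre b (stab_sec n m v) x ->
  lpre a (stab_sec n m v) y -> lpre b (stab_sec n m v) y.
Proof.
move=> Hv Ga [Gx Kax] [_ Kbx] [Gy Kay]; split=> //.
have [a' [Ga' Eaa' Ea'a]] := mem_inv Ga; have [x' [Gx' Exx' _]] := mem_inv Gx.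
have Kj : stab_sec n m v (x' \o a').
  apply: stab_sec_rinv Hv Kax (mem_comp Gx' Ga') _.
  by apply: funext => w /=; rewrite (comp_idK Exx') (comp_idK Eaa').
have -> : b \o y = (b \o x) \o (x' \o a') \o (a \o y).
  by apply: funext => w /=; rewrite (comp_idK Ea'a) (comp_idK Exx').
by apply: (stab_sec_comp Hv) => //; apply: (stab_sec_comp Hv).
Qed.

Lemma lpre_section_meet n m v h1 h2 : size v = n -> stab n h1 -> stab n h2 ->
  lpre (section h1 v) (stab m) `&` lpre (section h2 v) (stab m) !=set0 ->
  lpre h1 (stab_sec n m v) `&` lpre h2 (stab_sec n m v) !=set0.
Proof.
move=> Hv S1 [G2 A2] [x [[Gx [_ B1x]] [_ [_ B2x]]]].
have G1 := proj1 S1; have T1 := mem_tree_aut G1.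
have [h1' [G1' E11' _]] := mem_inv G1; have T1' := mem_tree_aut G1'.
have [_ A1'] := stab_inv S1 G1' E11'.
have fix1' : h1' v = v by apply: A1'; rewrite Hv.
have E11's : section h1 v \o section h1' v = (fun w => w).
  by rewrite -section_comp // E11' section_id.
have A1'x : agree m (section h1' v) x.
  apply: (agree_injl (section_inj (v := v) T1)).
  by rewrite E11's; apply: agree_sym.
have G21' := mem_comp G2 G1'.
exists h1'; split; split=> //; first by rewrite E11'; apply: stab_sec_id.
split; first by split=> //; apply: agree_id_comp.
split=> //; split; first exact: HS.
by rewrite section_comp //; apply: agree_trans (agree_compl _ A1'x) B2x.
Qed.

End Subgroup.

Fixpoint words_upto (X : finType) (N : nat) : seq (seq X) :=
  if N is N'.+1 then [::] :: [seq x :: w | x <- enum X, w <- words_upto X N']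
  else [:: [::]].

Lemma mem_words_upto (X : finType) N (w : seq X) :
  (size w <= N)%N -> w \in words_upto X N.
Proof.
elim: N w => [|N IH] [|x w] //= Hw; rewrite inE; apply/orP; right.
by apply: allpairs_f; [rewrite mem_enum | exact: IH].
Qed.

Section Saturated.
Variables (X : finType) (G : set (treemap X)).
Implicit Types (g h k : treemap X) (v w : seq X).

Definition saturated N (S : set (treemap X)) :=
  S `<=` G /\ forall g k, S g -> G k -> agree N g k -> S k.

Lemma cone_measurable N h : G h -> measurable (cone G N h : set (Gspace G)).
Proof. by move=> Gh; apply: sub_sigma_algebra; exists N, h. Qed.

(* A level-N saturated set is determined by the values of its elements on the
   finitely many words of length <= N, so it is a countable union of cones. *)
Lemma saturated_measurable N S : saturated N S -> measurable (S : set (Gspace G)).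
Proof.
move=> [SG Ssat]; pose pattern g := map g (words_upto X N).
pose A s : set (Gspace G) :=
  [set k | exists g, [/\ S g, pattern g = s, G k & agree N k g]].
have -> : (S : set (Gspace G)) = \bigcup_s A s.
  apply/seteqP; split=> [g Sg | k [s _ [g [Sg _ Gk Akg]]]].
    by exists (pattern g) => //; exists g; split=> //; apply: SG.
  by apply: Ssat Sg Gk (agree_sym Akg).
apply: countable_bigcupT_measurable; first exact: countableP.
move=> s; have [[g0 [Sg0 Pg0]]|NE] := pselect (exists g, S g /\ pattern g = s).
  suff -> : A s = cone G N g0 by apply: cone_measurable; apply: SG.
  apply/seteqP; split=> [k [g [Sg Pg Gk Akg]] | k [Gk Akg0]]; last by exists g0.
  have Pgg0 : {in words_upto X N, g =1 g0}.
    by apply/eq_in_map; rewrite -/(pattern g) -/(pattern g0) Pg Pg0.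
  by split=> //; apply: agree_trans Akg _ => w /mem_words_upto /Pgg0.
suff -> : A s = set0 by exact: measurable0.
by apply/seteqP; split=> // k [g [Sg Pg _ _]]; apply: NE; exists g.
Qed.

Lemma saturated_cone n N h : (n <= N)%N -> saturated N (cone G n h).
Proof.
move=> Hn; split=> [g [] //|g k [Gg Agh] Gk Agk]; split=> //.
exact: agree_trans (agree_sym (agree_leq Hn Agk)) Agh.
Qed.

Lemma saturated_setI N A B : saturated N A -> saturated N B ->
  saturated N (A `&` B).
Proof.
move=> [AG Asat] [_ Bsat]; split=> [g [/AG] //|g k [Ag Bg] Gk Agk].
by split; [apply: Asat Ag Gk Agk | apply: Bsat Bg Gk Agk].
Qed.

Lemma saturated_Tv_preimage m v B : self_similar G -> saturated m B ->
  saturated (size v + m) (Tv_preimage G v B).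
Proof.
move=> HS [_ Bsat]; split=> [g [] //|g k [Gg Bg] Gk Agk]; split=> //.
by apply: Bsat Bg (HS _ _ Gk) (agree_section _ Agk).
Qed.

Lemma saturated_lpre N h A : closed_subgroup G -> G h -> saturated N A ->
  saturated N (lpre G h A).
Proof.
move=> HG Gh [_ Asat]; split=> [g [] //|g k [Gg Ahg] Gk Agk]; split=> //.
by apply: Asat Ahg (mem_comp HG Gh Gk) (agree_compl _ Agk).
Qed.

Lemma saturated_cylinder n m v ha hb : self_similar G -> size v = n ->
  saturated (n + m) (cone G n ha `&` Tv_preimage G v (cone G m hb)).
Proof.
move=> HS Hv; apply: saturated_setI; first exact/saturated_cone/leq_addr.
by rewrite -Hv; apply: saturated_Tv_preimage => //; apply: saturated_cone.
Qed.

End Saturated.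

Section Haar.
Variables (X : finType) (G : set (treemap X)) (R : realType).
Variable mu : {measure set (Gspace G) -> \bar R}.
Hypotheses (HG : closed_subgroup G) (Hmu : is_haar_prob mu).
Implicit Types (h : treemap X) (f : nat -> treemap X).

Lemma haar_le1 (A : set (Gspace G)) : measurable A -> mu A <= 1.
Proof.
by case: Hmu => <- _ _ mA; apply: le_measure; rewrite ?inE.
Qed.

Lemma haar_lpre h A : G h -> measurable (A : set (Gspace G)) -> A `<=` G ->
  mu (lpre G h A) = mu A.
Proof.
by case: Hmu => _ _ inv Gh mA AG; rewrite [LHS]inv // setIidl.
Qed.

Lemma haar_lpre_saturated N h A : G h -> saturated G N A ->
  mu (lpre G h A) = mu A.
Proof. by move=> Gh SA; apply: haar_lpre Gh (saturated_measurable SA) SA.1. Qed.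

Lemma lpre_bigsetU_measurable N A r f : saturated G N A ->
  (forall i, (i < r)%N -> G (f i)) ->
  measurable (\big[setU/set0]_(i < r) lpre G (f i) A : set (Gspace G)).
Proof.
move=> SA Gf; apply: bigsetU_measurable => i _.
exact: saturated_measurable (saturated_lpre HG (Gf _ (ltn_ord i)) SA).
Qed.

Lemma haar_disjoint_lpre N A r f : saturated G N A ->
  (forall i, (i < r)%N -> G (f i)) -> trivIset `I_r (fun i => lpre G (f i) A) ->
  mu (\big[setU/set0]_(i < r) lpre G (f i) A : set (Gspace G)) = mu A *+ r.
Proof.
move=> SA Gf tf.
rewrite (measure_semi_additive_ord_I mu (F := fun i => lpre G (f i) A)) //;
  first last.
- exact: lpre_bigsetU_measurable SA Gf.
- by move=> i /Gf Gi; exact: saturated_measurable (saturated_lpre HG Gi SA).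
rewrite (eq_bigr (fun=> mu A)) ?sumr_const ?card_ord // => i _.
exact: haar_lpre_saturated (Gf _ (ltn_ord i)) SA.
Qed.

End Haar.

Section Packing.
Variables (X : finType) (G : set (treemap X)) (R : realType).
Variable mu : {measure set (Gspace G) -> \bar R}.
Hypotheses (HG : closed_subgroup G) (HS : self_similar G) (Hmu : is_haar_prob mu).
Variables (n m : nat) (v : seq X).
Hypothesis Hv : size v = n.
Local Notation K := (stab_sec G n m v).

Definition packing r (f : nat -> treemap X) :=
  (forall i, (i < r)%N -> stab G n (f i)) /\
  trivIset `I_r (fun i => lpre G (f i) K).

Lemma packing_bound r f : packing r f -> mu (stab G m) *+ r <= 1.
Proof.
move=> [Sf tf].
have Gf i : (i < r)%N -> G (section (f i) v) by move/Sf => [/HS].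
have Sm := saturated_cone G (fun w => w) (leqnn m).
rewrite -(haar_disjoint_lpre HG Hmu Sm Gf).
  exact: haar_le1 (lpre_bigsetU_measurable HG Sm Gf).
move=> i j Ii Ij /(lpre_section_meet HG HS Hv (Sf _ Ii) (Sf _ Ij)).
exact: tf.
Qed.

Lemma packing_cover r f : packing r f -> ~ (exists f', packing r.+1 f') ->
  stab G n `<=` \big[setU/set0]_(i < r) lpre G (f i) K.
Proof.
move=> [Sf tf] Nmax g Sg; have [g' [Gg' Egg' Eg'g]] := mem_inv HG (proj1 Sg).
have Kg : lpre G g' K g by split; [case: Sg | rewrite Eg'g; exact: stab_sec_id].
rewrite -(bigcup_mkord r (fun i => lpre G (f i) K)); apply: contrapT => Ncov.
(* otherwise the coset g'^-1 K, which contains g, could be added to the family *)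
apply: Nmax; exists (fun i => if (i < r)%N then f i else g'); split.
  move=> i; case: ifP => [ir _|_ _]; first exact: Sf.
  exact: (stab_inv HG Sg Gg' Egg').
rewrite (_ : (fun i => _) =
  fun i => if (i < r)%N then lpre G (f i) K else lpre G g' K).
  apply: trivIset_ord_extend => // j jr; apply/seteqP; split=> // x [x1 x2].
  apply: Ncov; exists j => //.
  exact: (lpre_stab_sec_meet HG HS Hv Gg' x1 x2 Kg).
by apply: funext => i; case: ifP.
Qed.

Lemma exists_maximal_packing : 0 < mu (stab G m) ->
  exists r f, packing r f /\ ~ exists f', packing r.+1 f'.
Proof.
have : mu (stab G m) <= 1.
  exact: haar_le1 (saturated_measurable (saturated_cone G _ (leqnn m))).
case: (mu (stab G m)) (@packing_bound) => [p| |] // bound _.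
rewrite lte_fin => p_gt0.
have [B NB] : exists B, ~ exists f, packing B f.
  exists (Num.bound p^-1) => -[f /bound]; rewrite -EFin_natmul lee_fin leNgt.
  have /archi_boundP : (0 <= p^-1)%R by rewrite invr_ge0 ltW.
  by rewrite -div1r ltr_pdivrMr // mulr_natl => ->.
have P0 : exists f, packing 0 f.
  by exists (fun=> fun w => w); split=> [//|i j /=]; rewrite ltn0.
have [r [[f Pf] Nmax]] :=
  exists_last_nat (P := fun r => exists f, packing r f) P0 NB.
by exists r, f.
Qed.

Lemma haar_stab_mul_le : mu (stab G n) * mu (stab G m) <= mu K.
Proof.
have := measure_ge0 mu (stab G m); rewrite le_eqVlt => /orP[/eqP <-|p_gt0].
  by rewrite mule0 measure_ge0.
have [r [f [Pf Nmax]]] := exists_maximal_packing p_gt0.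
apply: mule_le_of_natmul (measure_ge0 _ _) (measure_ge0 _ _) _ (packing_bound Pf).
have [Sf tf] := Pf; have Gf i : (i < r)%N -> G (f i) by case/Sf.
have SK : saturated G (n + m) K := saturated_cylinder _ _ _ HS Hv.
rewrite -(haar_disjoint_lpre HG Hmu SK Gf tf).
apply: le_measure; rewrite ?inE.
- exact: saturated_measurable (saturated_cone G _ (leqnn n)).
- exact: (lpre_bigsetU_measurable HG SK Gf).
- exact: (packing_cover Pf Nmax).
Qed.

End Packing.

Theorem lemma1 (X : finType) (R : realType) (G : set (treemap X))
  (mu : {measure set (Gspace G) -> \bar R}) :
  closed_subgroup G -> self_similar G -> is_haar_prob mu ->
  forall (n m : nat), (1 <= n)%N -> (1 <= m)%N ->
  forall (ha hb : treemap X), G ha -> G hb ->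
  forall v : seq X, size v = n ->
  cone G n ha `&` Tv_preimage G v (cone G m hb) !=set0 ->
  mu (cone G n ha) * mu (cone G m hb)
    <= mu (cone G n ha `&` Tv_preimage G v (cone G m hb)).
Proof.
move=> HG HS Hmu n m _ _ ha hb _ Gb v Hv [g0 Sg0]; have [Cg0 _] := Sg0.
rewrite -(haar_lpre_saturated Hmu Cg0.1 (saturated_cylinder _ _ _ HS Hv)).
rewrite (lpre_cylinder HG HS Hv Sg0).
rewrite -(haar_lpre_saturated Hmu Cg0.1 (saturated_cone G _ (leqnn n))).
rewrite (lpre_cone HG Cg0).
rewrite -(haar_lpre_saturated Hmu Gb (saturated_cone G _ (leqnn m))).
rewrite (lpre_cone HG (conj Gb (fun w _ => erefl))).
exact: haar_stab_mul_le.
Qed.
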